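(* For every $m\ge0$ and $t,\theta\in\mathbb N_0$ with $t\le\theta$, almost surely $$\sigma(t;m)>\theta\iff V(s;m)>m\ \text{for all } s=t,\dots,\theta\iff m<\underline M(t,\theta).$$
   Context: $(\Omega,\mathcal F,\mathbb P)$ complete with filtration $\{\mathcal F(t)\}_{t\in\mathbb N_0}$; $\beta\in(0,1)$; $\{h(t)\}_{t\in\mathbb N}$ positive, predictable ($h(t)$ is $\mathcal F(t-1)$-measurable), with $\mathbb E[\sum_{t\ge0}\beta^th(t+1)]<\infty$. $\mathcal S(t)$: stopping times with values in $\{t,t+1,\dots\}\cup\{\infty\}$; $\beta^\infty:=0$. For $m\ge0$: $V(t;m):=\operatorname{ess\,sup}_{\tau\in\mathcal S(t)}\mathbb E[\sum_{u=t}^{\tau-1}\beta^{u-t}h(u+1)+m\beta^{\tau-t}\mid\mathcal F(t)]$ (a.s. continuous in $m$, so it may be evaluated at random $m$); $\sigma(t;m):=\inf\{\theta\ge t:V(\theta;m)=m\}$ ($\inf\emptyset=\infty$). Gittins index $M(t):=\operatorname{ess\,sup}\{X>0\ \mathcal F(t)\text{-measurable}:V(t;X)\ge X\}$; $\underline M(t,\theta):=\min_{t\le u\le\theta}M(u)$. *)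

From HB Require Import structures.
From mathcomp Require Import all_boot all_order all_algebra.
From mathcomp Require Import all_classical all_reals all_analysis.
From mathcomp Require Import measurable_realfun.
Set Implicit Arguments. Unset Strict Implicit. Unset Printing Implicit Defensive.
Import Order.TTheory GRing.Theory Num.Theory.
Import numFieldNormedType.Exports.
Local Open Scope classical_set_scope.
Local Open Scope ring_scope.

Section Defs.
Context {d : measure_display} {T : measurableType d} {R : realType}.

Definition meas_wrt {d'} {U : measurableType d'} (G : set (set T)) (f : T -> U) :=
  forall B : set U, measurable B -> G (f @^-1` B).

Definition filtration (F : nat -> set (set T)) :=
  (forall n, sigma_algebra setT (F n)) /\
  (forall n A, F n A -> measurable A) /\
  (forall n A, F n A -> F n.+1 A).

(* stopping time with values in {t, t+1, ...} \cup {oo}; None encodes oo *)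
Definition stopping_time_from (F : nat -> set (set T)) (t : nat)
    (tau : T -> option nat) :=
  (forall x n, tau x = Some n -> (t <= n)%N) /\
  (forall n, F n [set x | exists k, tau x = Some k /\ (k <= n)%N]).

(* \sum_{u=t}^{tau-1} beta^{u-t} h(u+1) + m beta^{tau-t}, with beta^oo = 0 *)
Definition payoff (beta : R) (h : nat -> T -> R) (t : nat) (m : R)
    (tau : T -> option nat) (x : T) : \bar R :=
  match tau x with
  | Some n => ((\sum_(t <= u < n) beta ^+ (u - t) * h u.+1 x)
               + m * beta ^+ (n - t))%:E
  | None => (\sum_(t <= u <oo) (beta ^+ (u - t) * h u.+1 x)%:E)%E
  end.

Definition cond_exp_version (P : probability T R) (G : set (set T))
    (X : T -> \bar R) (Y : T -> R) :=
  [/\ meas_wrt G Y, P.-integrable setT X, P.-integrable setT (EFin \o Y) &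
      forall A, G A -> (\int[P]_(x in A) (Y x)%:E = \int[P]_(x in A) X x)%E].

Definition is_ess_sup (P : probability T R) (G : set (set T))
    (S : set (T -> \bar R)) (Y : T -> \bar R) :=
  [/\ meas_wrt G Y,
      (forall X, S X -> {ae P, forall x, (X x <= Y x)%E}) &
      (forall Z : T -> \bar R, measurable_fun setT Z ->
         (forall X, S X -> {ae P, forall x, (X x <= Z x)%E}) ->
         {ae P, forall x, (Y x <= Z x)%E})].

Definition is_value_fun (P : probability T R) (F : nat -> set (set T))
    (beta : R) (h : nat -> T -> R) (V : nat -> R -> T -> R) :=
  forall t m, 0 <= m ->
    is_ess_sup P (F t)
      [set Y | exists tau Z, stopping_time_from F t tau /\
               cond_exp_version P (F t) (payoff beta h t m tau) Z /\
               Y = EFin \o Z]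
      (EFin \o V t m).

(* sigma(t;m) = inf {theta >= t : V(theta;m) = m}, inf of empty set = +oo *)
Definition sigma_time (V : nat -> R -> T -> R) (t : nat) (m : R) (x : T)
    : \bar R :=
  ereal_inf [set ((n%:R : R)%:E) | n in [set n | (t <= n)%N /\ V n m x = m]].

Definition is_gittins_index (P : probability T R) (F : nat -> set (set T))
    (V : nat -> R -> T -> R) (M : nat -> T -> \bar R) :=
  forall t,
    is_ess_sup P (F t)
      [set Y | exists X : T -> R, [/\ meas_wrt (F t) X, (forall x, 0 < X x),
               {ae P, forall x, X x < V t (X x) x} & Y = EFin \o X]]
      (M t).

Definition Mmin (M : nat -> T -> \bar R) (t theta : nat) (x : T) : \bar R :=
  \big[Order.min/+oo%E]_(t <= u < theta.+1) M u x.

End Defs.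

From HB Require Import structures.
From mathcomp Require Import all_boot all_order all_algebra.
From mathcomp Require Import all_classical all_reals all_analysis.
From mathcomp Require Import measurable_realfun.
From mathcomp Require Import lra ring.
Import Order.TTheory GRing.Theory Num.Theory.
Import numFieldNormedType.Exports.
Local Open Scope classical_set_scope.
Local Open Scope ring_scope.

(* Stopping at once gives V(s;m) >= m, and stopping one step later gives
   V(s;y) >= h(s+1) + beta y; the first makes {sigma(t;m) > theta} equal to
   {V(s;m) > m for t <= s <= theta}, so everything reduces to: for fixed s,
   a.s. V(s;m) > m iff M(s) > m.
   If V(s;m) > m, continuity gives a rational r > m with V(s;r) > r, and the
   F(s)-measurable variable equal to r on {V(s;r) > r} and to h(s+1) elsewhere
   belongs to the family whose essential supremum is M(s), so M(s) >= r > m.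
   Conversely, the retirement reward enters every payoff with a discount
   factor at most 1, whence V(s;r) <= V(s;m) + (r - m) for r >= m; on
   {V(s;m) = m} this forbids any X of the family to exceed m (again through a
   rational r), so M(s) <= m there.  Quantifying over rationals keeps all the
   a.s. statements countable, and conditional expectations are obtained as
   Radon-Nikodym derivatives on the sub-sigma-algebra. *)

Lemma meas_wrt_EFin {d} {T : measurableType d} {R : realType}
    (G : set (set T)) (f : T -> R) :
  meas_wrt G (EFin \o f) -> meas_wrt G f.
Proof.
move=> mf B mB; have := mf (EFin @` B) (measurable_image_EFin mB).
congr G; apply/seteqP; split => x /=; first by move=> [y By [<-]].
by move=> Bx; exists (f x).
Qed.

Lemma meas_wrt_measurable_fun {d d'} {T : measurableType d}
    {U : measurableType d'} {G : set (set T)} {f : T -> U} :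
  (forall A, G A -> measurable A) -> meas_wrt G f -> measurable_fun setT f.
Proof.
by move=> G_measurable mf _ B mB; rewrite setTI; exact/G_measurable/mf.
Qed.

Section sub_sigma_algebra.
Context {d : measure_display} {T : measurableType d} {R : realType}.
Context {P : probability T R} {G : set (set T)}.
Hypothesis G_sigma : sigma_algebra setT G.
Hypothesis G_measurable : forall A, G A -> measurable A.

Definition subT := g_sigma_algebraType G.

Let measurable_subTE : (measurable : set (set subT)) = G.
Proof. exact: measurable_g_measurableTypeE. Qed.

Lemma meas_wrtP {d'} {U : measurableType d'} (f : T -> U) :
  meas_wrt G f <-> measurable_fun setT (f : subT -> U).
Proof.
split => [mf _ B mB|mf B mB].
  by rewrite setTI measurable_subTE; exact: mf.
by have := mf measurableT B mB; rewrite setTI measurable_subTE.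
Qed.

Let measurable_id_subT : measurable_fun setT (id : T -> subT).
Proof. by move=> _ A; rewrite measurable_subTE setTI; exact: G_measurable. Qed.

Let measurable_of_subT (A : set subT) : measurable A -> measurable (A : set T).
Proof. by rewrite measurable_subTE; exact: G_measurable. Qed.

Definition Psub : set subT -> \bar R := P.

Let Psub0 : Psub set0 = 0%E. Proof. exact: measure0. Qed.
Let Psub_ge0 A : (0 <= Psub A)%E. Proof. exact: measure_ge0. Qed.
Let Psub_sigma_additive : semi_sigma_additive Psub.
Proof.
move=> A mA tA mUA; apply: (@measure_semi_sigma_additive _ _ _ P) => //.
- by move=> n; exact: measurable_of_subT.
- exact: measurable_of_subT.
Qed.
HB.instance Definition _ := isMeasure.Build _ _ _ Psub
  Psub0 Psub_ge0 Psub_sigma_additive.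
Let PsubT : Psub setT = 1%E. Proof. exact: probability_setT. Qed.
HB.instance Definition _ := Measure_isProbability.Build _ _ _ Psub PsubT.

Section condexp.
Context {X : T -> \bar R}.
Hypothesis intX : P.-integrable setT X.

(* Its Radon-Nikodym derivative with respect to Psub is E[X | G]. *)
Definition charge_sub : set subT -> \bar R := induced_charge intX.

Let charge_sub0 : charge_sub set0 = 0%E. Proof. exact: charge0. Qed.
Let charge_sub_fin A : measurable A -> charge_sub A \is a fin_num.
Proof. by move=> /measurable_of_subT; exact: fin_num_measure. Qed.
Let charge_sub_sigma_additive : semi_sigma_additive charge_sub.
Proof.
move=> A mA tA mUA.
apply: (@charge_semi_sigma_additive _ _ _ (induced_charge intX)) => //.
- by move=> n; exact: measurable_of_subT.
- exact: measurable_of_subT.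
Qed.
HB.instance Definition _ := isCharge.Build _ _ _ charge_sub
  charge_sub0 charge_sub_fin charge_sub_sigma_additive.

Let charge_sub_dominates : charge_sub `<< Psub.
Proof.
move=> N N0 A mA AN; apply: null_set_integral => //.
- exact: measurable_of_subT.
- exact: measurable_funTS (measurable_int _ intX).
- exact: N0.
Qed.

Lemma cond_exp_version_exists : exists Y : T -> R, cond_exp_version P G X Y.
Proof.
pose D := Radon_Nikodym charge_sub Psub.
have iD : Psub.-integrable setT D.
  exact: Radon_Nikodym_integrable charge_sub_dominates.
have mD : measurable_fun setT D := measurable_int _ iD.
have finD x : D x \is a fin_num.
  exact: Radon_Nikodym_fin_num charge_sub_dominates.
have iDT : P.-integrable setT (D : T -> \bar R).
  apply/integrableP; split; first exact: measurableT_comp mD measurable_id_subT.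
  have := (integrableP _ _ _ iD).2.
  rewrite (_ : \int[Psub]_x `|D x| =
               \int[pushforward P (id : T -> subT)]_x `|D x|)%E //.
  by rewrite ge0_integral_pushforward //; exact: measurableT_comp mD.
exists (fine \o D); split.
- apply/meas_wrtP.
  exact: measurableT_comp (fine_measurable measurableT) mD.
- exact: intX.
- rewrite (_ : _ \o _ = D :> (T -> \bar R)) //.
  by apply/funext => x /=; rewrite fineK.
- move=> A GA; have mA : measurable (A : set subT) by rewrite measurable_subTE.
  transitivity (\int[P]_(x in A) (D : T -> \bar R) x)%E.
    by apply: eq_integral => x _; rewrite /= fineK.
  rewrite -(integral_pushforward measurable_id_subT mD) //; last first.
    exact: integrableS measurableT (G_measurable _ GA) (subsetT _) iDT.
  rewrite -[LHS]/(\int[Psub]_(x in A) D x)%E.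
  by rewrite -Radon_Nikodym_integral //; exact: charge_sub_dominates.
Qed.

End condexp.

Lemma ae_le_of_le_integral (Y1 Y2 : T -> R) :
  meas_wrt G Y1 -> meas_wrt G Y2 ->
  P.-integrable setT (EFin \o Y1) -> P.-integrable setT (EFin \o Y2) ->
  (forall A, G A ->
     (\int[P]_(x in A) (Y1 x)%:E <= \int[P]_(x in A) (Y2 x)%:E)%E) ->
  {ae P, forall x, Y1 x <= Y2 x}.
Proof.
move=> /meas_wrtP mY1 /meas_wrtP mY2 iY1 iY2 leY.
pose A := [set x | Y2 x < Y1 x].
have GA : G A.
  have := measurable_funB mY1 mY2 measurableT (measurable_itv `]0, +oo[).
  rewrite setTI measurable_subTE; congr G; apply/seteqP.
  by split => x /=; rewrite in_itv /= andbT subr_gt0.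
have mA := G_measurable _ GA.
pose f x := (Y1 x - Y2 x)%:E.
have iA1 : P.-integrable A (EFin \o Y1) by exact: integrableS iY1.
have iA2 : P.-integrable A (EFin \o Y2) by exact: integrableS iY2.
have mf : measurable_fun A f.
  apply/measurable_EFinP; apply: measurable_funB.
  - by have /measurable_EFinP := measurable_int _ iA1.
  - by have /measurable_EFinP := measurable_int _ iA2.
have f_ge0 x : A x -> (0 <= f x)%E by rewrite /f lee_fin subr_ge0 => /ltW.
have int_f0 : (\int[P]_(x in A) f x = 0)%E.
  apply/eqP; rewrite eq_le (integral_ge0 _ f_ge0) andbT /f.
  under eq_integral do rewrite EFinB.
  by rewrite integralB // sube_le0 leY.
have : (\int[P]_(x in A) `|f x| = 0)%E.
  rewrite -int_f0; apply: eq_integral => x /[!inE] Ax.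
  by rewrite gee0_abs // f_ge0.
move/(ae_eq_integral_abs _ mA mf); apply: filterS => x /= f0.
rewrite leNgt; apply/negP => Ax.
by have := f0 Ax; rewrite /f => -[]; apply/eqP; rewrite subr_eq0 gt_eqF.
Qed.

Lemma cond_exp_version_le_add {X1 X2 : T -> \bar R} {Y1 Y2 : T -> R} {c : R} :
  (forall x, (X1 x <= X2 x + c%:E)%E) ->
  cond_exp_version P G X1 Y1 -> cond_exp_version P G X2 Y2 ->
  {ae P, forall x, Y1 x <= Y2 x + c}.
Proof.
move=> X12 [mY1 iX1 iY1 eY1] [mY2 iX2 iY2 eY2].
have ic A : measurable A -> P.-integrable A (cst c%:E).
  by move=> mA; exact: finite_measure_integrable_cst.
have EFinD_Y2c : EFin \o (fun x => Y2 x + c) = ((EFin \o Y2) \+ cst c%:E)%E.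
  by apply/funext => x; rewrite /= EFinD.
apply: ae_le_of_le_integral => //.
- apply/meas_wrtP; apply: measurable_funD; last exact: measurable_cst.
  exact/meas_wrtP.
- by rewrite EFinD_Y2c; apply: integrableD => //; exact: ic.
- move=> A GA; have mA := G_measurable _ GA.
  have iA (f : T -> \bar R) : P.-integrable setT f -> P.-integrable A f.
    by move=> /integrableS; apply.
  rewrite eY1 // [X in (_ <= X)%E](eq_integral (fun x => (Y2 x)%:E + c%:E)%E).
    2: by move=> x _; rewrite EFinD.
  rewrite integralD //; [|exact: iA|exact: ic].
  rewrite eY2 // -integralD //; [|exact: iA|exact: ic].
  apply: le_integral => //; first exact: iA.
  by apply: integrableD => //; [exact: iA|exact: ic].
Qed.

End sub_sigma_algebra.

Section almost_everywhere.
Context {d : measure_display} {T : measurableType d} {R : realType}.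
Context {P : probability T R}.

Lemma ae_forall_countable {I : countType} {Q : I -> T -> Prop} :
  (forall i, {ae P, forall x, Q i x}) -> {ae P, forall x, forall i, Q i x}.
Proof.
move=> aeQ.
have : {ae P, forall x, forall n,
    if @unpickle I n is Some i then Q i x else True}.
  by apply: ae_foralln => n; case: unpickle => [i|]; [exact: aeQ|exact: nearW].
by apply: filterS => x Qx i; have := Qx (pickle i); rewrite pickleK.
Qed.

Lemma ae_imply {b : Prop} {Q : T -> Prop} :
  (b -> {ae P, forall x, Q x}) -> {ae P, forall x, b -> Q x}.
Proof.
case: (pselect b) => [/[swap]/[apply]|nb _]; first by apply: filterS => x Qx _.
by apply: nearW => x /nb.
Qed.

End almost_everywhere.

Section rational_approximation.
Context {R : realType}.
Implicit Types (f : R -> R) (a b y e : R).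

Lemma rat_approx_right {f y e} :
  {within [set z | 0 <= z], continuous f} -> 0 <= y -> 0 < e ->
  exists r : rat, [/\ y < ratr r, ratr r < y + e & `|f (ratr r) - f y| < e].
Proof.
move=> cf y0 e0.
have /cvgrPdist_lt/(_ e e0) := (subspace_continuousP _ _).1 cf y y0.
rewrite near_withinE => /nbhs_ballP[r /= r0 near_y].
have : y < y + Num.min r e by rewrite ltrDl lt_min r0 e0.
move=> /rat_in_itvoo[q]; rewrite in_itv /= => /andP[yq qy].
exists q; split => //.
  by apply: lt_le_trans qy _; rewrite lerD2l ge_min lexx orbT.
rewrite distrC; apply: near_y; last by rewrite (le_trans y0) // ltW.
rewrite -ball_normE /= ler0_norm ?subr_le0 ?ltW //.
by rewrite opprB ltrBlDl (lt_le_trans qy) // lerD2l ge_min lexx.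
Qed.

Lemma rat_gt_lt_fun {f y} : {within [set z | 0 <= z], continuous f} ->
  0 <= y -> y < f y -> exists2 r : rat, y < ratr r & ratr r < f (ratr r).
Proof.
move=> cf y0 yfy.
have e0 : 0 < (f y - y) / 2 by rewrite divr_gt0 // subr_gt0.
have [r [yr ry]] := rat_approx_right cf y0 e0.
by rewrite ltr_distlC => /andP[_ hi]; exists r => //; lra.
Qed.

Lemma rat_gt_fun_lt_affine {f a b y} :
  {within [set z | 0 <= z], continuous f} -> 0 <= y -> 0 <= b ->
  f y < a + b * y ->
  exists2 r : rat, y < ratr r & f (ratr r) < a + b * ratr r.
Proof.
move=> cf y0 b0 fy_lt.
have e0 : 0 < a + b * y - f y by rewrite subr_gt0.
have [r [yr _]] := rat_approx_right cf y0 e0.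
rewrite ltr_distlC => /andP[lo _]; exists r => //.
have : b * y <= b * ratr r by rewrite ler_wpM2l // ltW.
lra.
Qed.

End rational_approximation.

Lemma measurable_prop_set {d} {T : measurableType d} (p : Prop) :
  measurable [set _ : T | p].
Proof.
have [hp|np] := pselect p.
  by rewrite (_ : [set _ | p] = setT) //; apply/seteqP; split.
by rewrite (_ : [set _ | p] = set0) //; apply/seteqP; split.
Qed.

Section option_valued.
Context {d d'} {T : measurableType d} {U : measurableType d'}.
Variable tau : T -> option nat.
Hypothesis mtau : forall n, measurable [set x | tau x = Some n].

Lemma measurable_fun_option_comp (g : option nat -> U) :
  measurable_fun setT (g \o tau).
Proof.
have mNone : measurable [set x | tau x = None].
  rewrite (_ : [set x | _] = ~` \bigcup_n [set x | tau x = Some n]).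
    exact/measurableC/bigcupT_measurable.
  apply/seteqP; split => [x /= tx [n _ /=]|x /=]; first by rewrite tx.
  by case E: (tau x) => [n|//] nS; exfalso; apply: nS; exists n.
move=> _ B _; rewrite setTI.
rewrite (_ : _ @^-1` B =
    \bigcup_n ([set x | tau x = Some n] `&` [set _ | B (g (Some n))]) `|`
    ([set x | tau x = None] `&` [set _ | B (g None)])).
  apply: measurableU; last exact: measurableI mNone (measurable_prop_set _).
  apply: bigcupT_measurable => n.
  exact: measurableI (mtau n) (measurable_prop_set _).
apply/seteqP; split => x /=; last by case=> [[n _ /= [-> //]]|[-> //]].
by case E: (tau x) => [n|] Bx; [left; exists n|right].
Qed.

End option_valued.

Section stopping_time.
Context {d} {T : measurableType d} {F : nat -> set (set T)}.
Hypothesis F_filtration : filtration F.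

Lemma stopping_time_cst {t k} :
  (t <= k)%N -> stopping_time_from F t (fun=> Some k).
Proof.
have [F_sigma _] := F_filtration.
move=> tk; split => [x n [<-] //|n].
have [kn|nk] := leqP k n.
  rewrite (_ : [set _ | _] = setT); last first.
    by apply/seteqP; split => // x _; exists k.
  by have [F0 FD _] := F_sigma n; have := FD set0 F0; rewrite setD0.
rewrite (_ : [set _ | _] = set0); first by case: (F_sigma n).
by apply/seteqP; split => // x [k' [[<-]]]; rewrite leqNgt nk.
Qed.

Lemma stopping_time_measurable_eq {t tau} : stopping_time_from F t tau ->
  forall n, measurable [set x | tau x = Some n].
Proof.
have [_ [F_measurable _]] := F_filtration.
move=> [_ tau_le] n.
pose Le k := [set x | exists k', tau x = Some k' /\ (k' <= k)%N].
have mLe k : measurable (Le k) by apply: F_measurable; exact: tau_le.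
case: n => [|n].
  rewrite (_ : [set x | _] = Le 0%N) //; apply/seteqP; split => x /=.
    by move=> tx; exists 0%N.
  by move=> [k' [tx]]; rewrite leqn0 tx => /eqP ->.
rewrite (_ : [set x | _] = Le n.+1 `\` Le n); first exact: measurableD.
apply/seteqP; split => [x /= tx|x /= [[k' [tx kn]] nle]].
  by split; [exists n.+1|move=> [k' []]; rewrite tx => -[<-]; rewrite ltnn].
rewrite tx; congr Some; apply/eqP; rewrite eqn_leq kn /= ltnNge.
by apply/negP => k'n; apply: nle; exists k'.
Qed.

End stopping_time.

Section payoff.
Context {d} {T : measurableType d} {R : realType}.
Variables (beta : R) (h : nat -> T -> R).
Hypothesis beta01 : 0 <= beta <= 1.

Let beta_exp01 k : 0 <= beta ^+ k <= 1.
Proof. by case/andP: beta01 => b0 b1; rewrite exprn_ge0 // exprn_ile1. Qed.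

Lemma payoff_le_shift t tau {q q'} : q <= q' -> forall x,
  (payoff beta h t q' tau x <= payoff beta h t q tau x + (q' - q)%:E)%E.
Proof.
move=> qq' x; rewrite /payoff; case: (tau x) => [n|]; last first.
  by rewrite lee_paddr // lee_fin subr_ge0.
have /andP[b0 b1] := beta_exp01 (n - t); rewrite -EFinD lee_fin.
have : 0 <= q' - q by rewrite subr_ge0.
nra.
Qed.

Lemma payoff_integrable_shift {P : probability T R} {t q q' tau} :
  (forall n, measurable [set x | tau x = Some n]) ->
  P.-integrable setT (payoff beta h t q' tau) ->
  P.-integrable setT (payoff beta h t q tau).
Proof.
move=> mtau ip'.
pose g o := if o is Some n then ((q - q') * beta ^+ (n - t))%:E else 0%E.
have -> : payoff beta h t q tau = (payoff beta h t q' tau \+ (g \o tau))%E.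
  apply/funext => x; rewrite /payoff /g /=; case: (tau x) => [n|]; last first.
    by rewrite adde0.
  by rewrite -EFinD; congr EFin; ring.
apply: integrableD => //.
apply: (le_integrable measurableT (g := EFin \o cst `|q - q'|)).
- exact: measurable_fun_option_comp.
- move=> x _ /=; rewrite /g; case: (tau x) => [n|] /=; last first.
    by rewrite normr0 lee_fin.
  have /andP[b0 b1] := beta_exp01 (n - t).
  by rewrite lee_fin normrM normr_id [`|beta ^+ _|]ger0_norm // ler_piMr.
- exact: finite_measure_integrable_cst.
Qed.

End payoff.

Section value_function.
Context {d : measure_display} {T : measurableType d} {R : realType}.
Context {P : probability T R} {F : nat -> set (set T)} {beta : R}
  {h : nat -> T -> R} {V : nat -> R -> T -> R}.
Hypothesis F_filtration : filtration F.
Hypothesis beta01 : 0 < beta < 1.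
Hypothesis h_gt0 : forall n x, 0 < h n x.
Hypothesis h_adapted : forall n, meas_wrt (F n) (h n.+1).
Hypothesis h_discounted_integrable :
  (\int[P]_x (\sum_(0 <= u <oo) (beta ^+ u * h u.+1 x)%:E) < +oo)%E.
Hypothesis V_value : is_value_fun P F beta h V.
Hypothesis V_continuous : forall t, {ae P, forall x,
  {within [set m : R | 0 <= m], continuous (fun m => V t m x)}}.

Let F_sigma s : sigma_algebra setT (F s). Proof. by case: F_filtration. Qed.
Let F_measurable s A : F s A -> measurable A.
Proof. by case: F_filtration => _ [+ _]; apply. Qed.
Let beta_gt0 : 0 < beta. Proof. by case/andP: beta01. Qed.

Lemma measurable_h s : measurable_fun setT (h s.+1).
Proof. exact: meas_wrt_measurable_fun (@F_measurable s) (h_adapted s). Qed.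

Lemma V_adapted s c : 0 <= c -> meas_wrt (F s) (V s c).
Proof. by move=> c0; have [mV _ _] := V_value s c c0; exact: meas_wrt_EFin. Qed.

(* h(s+1) is bounded by beta^-s times the discounted sum of all rewards. *)
Lemma h_integrable s : P.-integrable setT (EFin \o h s.+1).
Proof.
pose S x := (\sum_(0 <= u <oo) (beta ^+ u * h u.+1 x)%:E)%E.
have term_ge0 u x : (0 <= (beta ^+ u * h u.+1 x)%:E)%E.
  by rewrite lee_fin mulr_ge0 ?exprn_ge0 ?ltW ?h_gt0.
have S_ge0 x : (0 <= S x)%E by apply: nneseries_ge0 => u _ _.
have iS : P.-integrable setT S.
  apply/integrableP; split; last by under eq_integral do rewrite gee0_abs //.
  apply: ge0_emeasurable_sum => [u x _ _ //|u _].
  by apply/measurable_EFinP/measurable_funM => //; exact: measurable_h.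
have bs : 0 < beta ^+ s by rewrite exprn_gt0.
apply: (le_integrable measurableT (g := fun x => ((beta ^+ s)^-1)%:E * S x)%E).
- by apply/measurable_EFinP; exact: measurable_h.
- move=> x _ /=; apply: le_trans (lee_abs _).
  rewrite ger0_norm ?(ltW (h_gt0 _ _)) //.
  have : ((beta ^+ s * h s.+1 x)%:E <= S x)%E.
    apply: le_trans (nneseries_lim_ge s.+1 _) => [|u _ _//].
    by rewrite big_nat_recr //= lee_paddl // sume_ge0.
  move/(lee_wpmul2l (x := ((beta ^+ s)^-1)%:E)).
  rewrite lee_fin invr_ge0 ltW // => /(_ isT).
  by rewrite -EFinM mulrA mulVf ?gt_eqF // mul1r.
- exact: integrableZl.
Qed.

Lemma cond_exp_le_value {s c tau Z} : 0 <= c -> stopping_time_from F s tau ->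
  cond_exp_version P (F s) (payoff beta h s c tau) Z ->
  {ae P, forall x, Z x <= V s c x}.
Proof.
move=> c0 st ceZ; have [_ V_ub _] := V_value s c c0.
by apply: filterS (V_ub (EFin \o Z) _) => [x|]; [rewrite lee_fin|exists tau, Z].
Qed.

Lemma value_ge_cst_stop {s c k} {Z : T -> R} : 0 <= c -> (s <= k)%N ->
  meas_wrt (F s) Z -> P.-integrable setT (EFin \o Z) ->
  payoff beta h s c (fun=> Some k) = EFin \o Z ->
  {ae P, forall x, Z x <= V s c x}.
Proof.
move=> c0 sk mZ iZ pE.
apply: cond_exp_le_value c0 (stopping_time_cst F_filtration sk) _.
by rewrite pE; split.
Qed.

Lemma value_ge_retire s c : 0 <= c -> {ae P, forall x, c <= V s c x}.
Proof.
move=> c0; apply: value_ge_cst_stop c0 (leqnn s) _ _ _.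
- by apply/(meas_wrtP (F_sigma s)); exact: measurable_cst.
- exact: finite_measure_integrable_cst.
- by apply/funext => x; rewrite /payoff big_geq // subnn expr0 mulr1 add0r.
Qed.

Lemma value_ge_continue s c : 0 <= c ->
  {ae P, forall x, h s.+1 x + beta * c <= V s c x}.
Proof.
move=> c0; apply: value_ge_cst_stop c0 (leqnSn s) _ _ _.
- apply/(meas_wrtP (F_sigma s))/measurable_funD; last exact: measurable_cst.
  exact/(meas_wrtP (F_sigma s)).
- rewrite (_ : _ \o _ = (EFin \o h s.+1) \+ (EFin \o cst (beta * c)%R))%E //.
  apply: integrableD => //; first exact: h_integrable.
  exact: finite_measure_integrable_cst.
- apply/funext => x; rewrite /payoff big_nat1 subnn expr0 mul1r subSnn expr1.
  by rewrite mulrC.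
Qed.

Lemma value_ge_continue_all s :
  {ae P, forall x, forall y, 0 <= y -> h s.+1 x + beta * y <= V s y x}.
Proof.
have := ae_forall_countable (fun r : rat =>
  ae_imply (value_ge_continue s (ratr r))).
apply: (filterS2 _ _ (V_continuous s)) => x cVx le_rat y y0.
rewrite leNgt; apply/negP.
move=> /(rat_gt_fun_lt_affine cVx y0 (ltW beta_gt0))[r yr].
by apply/negP; rewrite -leNgt le_rat // (le_trans y0) // ltW.
Qed.

Lemma value_le_shift s q q' : 0 <= q -> q <= q' ->
  {ae P, forall x, V s q' x <= V s q x + (q' - q)}.
Proof.
move=> q0 qq'; have q'0 := le_trans q0 qq'.
have [_ _ V_least] := V_value s q' q'0.
have beta01' : 0 <= beta <= 1 by case/andP: beta01 => b0 b1; rewrite !ltW.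
suff : {ae P, forall x, ((V s q' x)%:E <= (V s q x + (q' - q))%:E)%E}.
  by apply: filterS => x; rewrite lee_fin.
apply: V_least.
  apply/measurable_EFinP/measurable_funD; last exact: measurable_cst.
  exact: meas_wrt_measurable_fun (@F_measurable s) (V_adapted s q q0).
move=> _ [tau [Z [st [ceZ ->]]]].
have [_ ip' _ _] := ceZ.
have ip : P.-integrable setT (payoff beta h s q tau) :=
  payoff_integrable_shift beta h beta01'
    (stopping_time_measurable_eq F_filtration st) ip'.
have [W ceW] := cond_exp_version_exists (F_sigma s) (@F_measurable s) ip.
have ZW := cond_exp_version_le_add (F_sigma s) (@F_measurable s)
  (payoff_le_shift beta h beta01' s tau qq') ceZ ceW.
apply: (filterS2 _ _ ZW (cond_exp_le_value q0 st ceW)) => x ZWx WVx.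
by rewrite /= lee_fin (le_trans ZWx) // lerD2r.
Qed.

Context {M : nat -> T -> \bar R}.
Hypothesis M_gittins : is_gittins_index P F V M.

(* A member of the family defining M(s): off {0 < r < V(s;r)} it is h(s+1),
   and V(s;y) >= h(s+1) + beta y. *)
Definition gittins_witness s (r : rat) x : R :=
  if (0 < ratr r :> R) && (ratr r < V s (ratr r) x) then ratr r else h s.+1 x.

Lemma gittins_witness_le s r :
  {ae P, forall x, ((gittins_witness s r x)%:E <= M s x)%E}.
Proof.
have [_ M_ub _] := M_gittins s; apply: M_ub; exists (gittins_witness s r).
split => //.
- have /(meas_wrtP (F_sigma s)) mh := h_adapted s.
  apply/(meas_wrtP (F_sigma s)); rewrite /gittins_witness.
  have [r0|_] /= := ltP 0 (ratr r : R); last exact: mh.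
  apply: measurable_fun_ifT => //; apply: measurable_fun_ltr => //.
  exact/(meas_wrtP (F_sigma s))/V_adapted/ltW.
- by move=> x; rewrite /gittins_witness; case: ifP => [/andP[]//|_].
- apply: filterS (value_ge_continue_all s) => x h_le.
  rewrite /gittins_witness; case: ifP => [/andP[]//|_].
  have := h_le _ (ltW (h_gt0 s.+1 x)).
  have : 0 < beta * h s.+1 x by rewrite mulr_gt0.
  lra.
Qed.

Lemma gittins_gt_of_value_gt s m : 0 <= m ->
  {ae P, forall x, m < V s m x -> (m%:E < M s x)%E}.
Proof.
move=> m0; have := ae_forall_countable (gittins_witness_le s).
apply: (filterS2 _ _ (V_continuous s)) => x cVx le_M mV.
have [r mr rV] := rat_gt_lt_fun cVx m0 mV.
have r0 : 0 < ratr r :> R by rewrite (le_lt_trans m0).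
by have := le_M r; rewrite /gittins_witness r0 rV; apply: lt_le_trans.
Qed.

Lemma le_retire_of_value_eq s m {X : T -> R} : 0 <= m ->
  (forall x, 0 < X x) -> {ae P, forall x, X x < V s (X x) x} ->
  {ae P, forall x, V s m x = m -> X x <= m}.
Proof.
move=> m0 X_gt0 X_lt; have := ae_forall_countable (fun r : rat =>
  ae_imply (value_le_shift s m (ratr r) m0)).
apply: (filterS3 _ _ (V_continuous s) X_lt) => x cVx XV V_shift Vm.
rewrite leNgt; apply/negP => mX.
have [r Xr rV] := rat_gt_lt_fun cVx (ltW (X_gt0 x)) XV.
have := V_shift r (le_trans (ltW mX) (ltW Xr)).
by rewrite Vm; lra.
Qed.

Lemma value_gt_of_gittins_gt s m : 0 <= m ->
  {ae P, forall x, (m%:E < M s x)%E -> m < V s m x}.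
Proof.
move=> m0; have [_ _ M_least] := M_gittins s.
pose Z x := if V s m x == m then m%:E else +oo%E.
have M_le_Z : {ae P, forall x, (M s x <= Z x)%E}.
  apply: M_least => [|_ [X [_ X_gt0 X_lt ->]]].
    apply: measurable_fun_ifT => //; apply: measurable_fun_eqr => //.
    exact: meas_wrt_measurable_fun (@F_measurable s) (V_adapted s m m0).
  apply: filterS (le_retire_of_value_eq s m m0 X_gt0 X_lt) => x XVm.
  by rewrite /Z; case: eqP => [/XVm|_]; [rewrite lee_fin|rewrite leey].
apply: (filterS2 _ _ M_le_Z (value_ge_retire s m m0)) => x MZ mV mM.
rewrite lt_neqAle mV andbT; apply/eqP => Vm.
by move: MZ; rewrite /Z -Vm eqxx leNgt mM.
Qed.

Lemma value_ge_and_gt_iff_gittins_gt s m : 0 <= m ->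
  {ae P, forall x, m <= V s m x /\ (m < V s m x <-> (m%:E < M s x)%E)}.
Proof.
move=> m0; apply: (filterS3 _ _ (value_ge_retire s m m0)
  (gittins_gt_of_value_gt s m m0) (value_gt_of_gittins_gt s m m0)).
by move=> x ? ? ?; split.
Qed.

End value_function.

Lemma sigma_time_gt_iff {d} {T : measurableType d} {R : realType}
    (V : nat -> R -> T -> R) t theta m x :
  (forall s, (t <= s <= theta)%N -> m <= V s m x) ->
  ((theta%:R : R)%:E < sigma_time V t m x)%E <->
  (forall s, (t <= s <= theta)%N -> m < V s m x).
Proof.
move=> mV; split => [lt_sigma s /andP[ts sth]|mV'].
  rewrite lt_neqAle mV ?ts // andbT; apply/eqP => Vm.
  have : (sigma_time V t m x <= (s%:R : R)%:E)%E.
    by apply: ereal_inf_lbound; exists s.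
  by move=> /(lt_le_trans lt_sigma); rewrite lte_fin ltr_nat ltnNge sth.
apply: (@lt_le_trans _ _ (theta.+1%:R : R)%:E).
  by rewrite lte_fin ltr_nat.
apply: le_ereal_inf_tmp => _ [n [tn Vn] <-].
rewrite lee_fin ler_nat ltnNge; apply/negP => nth.
by have := mV' n; rewrite tn nth Vn ltxx => /(_ isT).
Qed.

Lemma Mmin_gt_iff {d} {T : measurableType d} {R : realType}
    (M : nat -> T -> \bar R) t theta x (m : R) :
  (m%:E < Mmin M t theta x)%E <->
  (forall s, (t <= s <= theta)%N -> (m%:E < M s x)%E).
Proof.
rewrite /Mmin; split => [lt_min s /andP[ts sth]|lt_M].
  apply: (lt_le_trans lt_min).
  by apply: ge_bigmin_seq => //; rewrite mem_index_iota ts ltnS.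
rewrite big_nat_cond; apply: lt_bigmin => [|s /andP[/andP[ts sth] _]].
  exact: ltey.
by apply: lt_M; rewrite ts -ltnS.
Qed.

Theorem lemma3p3 (d : measure_display) (T : measurableType d) (R : realType)
  (P : probability T R) (F : nat -> set (set T)) (beta : R)
  (h : nat -> T -> R) (V : nat -> R -> T -> R) (M : nat -> T -> \bar R) :
  (forall A, P.-negligible A -> measurable A) ->
  filtration F ->
  0 < beta < 1 ->
  (forall n x, 0 < h n x) ->
  (forall n, meas_wrt (F n) (h n.+1)) ->
  (\int[P]_x (\sum_(0 <= u <oo) (beta ^+ u * h u.+1 x)%:E) < +oo)%E ->
  is_value_fun P F beta h V ->
  (forall t, {ae P, forall x,
     {within [set m : R | 0 <= m], continuous (fun m => V t m x)}}) ->
  is_gittins_index P F V M ->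
  forall (m : R) (t theta : nat), 0 <= m -> (t <= theta)%N ->
  {ae P, forall x,
     (((theta%:R : R)%:E < sigma_time V t m x)%E <->
        (forall s, (t <= s <= theta)%N -> m < V s m x)) /\
     ((forall s, (t <= s <= theta)%N -> m < V s m x) <->
        (m%:E < Mmin M t theta x)%E)}.
Proof.
move=> _ hF hbeta hh hh_adapted hh_int hV hV_cont hM m t theta m0 _.
have := ae_foralln (fun s => value_ge_and_gt_iff_gittins_gt
  hF hbeta hh hh_adapted hh_int hV hV_cont hM s m m0).
apply: filterS => x Vx; split.
  by apply: sigma_time_gt_iff => s _; exact: (Vx s).1.
rewrite Mmin_gt_iff; split => lt_V s ts; apply/(Vx s).2; exact: lt_V.
Qed.
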